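(* Consider the DRV process with choice function $k(n)$ satisfying $k(n)\to\infty$ and $k(n)\ge\log_2 n$. Then there is a constant $C$ such that for all $n$ and every time $t\le n$, the expected number of red edges plus the expected number of green edges among the first $t$ edges added is at most $C\,\frac{n}{k(n)}$.
   Context: The DRV process (Degree Rule with Varying Choice): fix a function $k=k(n)$ with $2\le k(n)\le n$. Start at time $t=0$ with $n$ isolated vertices and no edges. At each time step $t=0,1,2,\dots$ (one edge is added per step, so after $t$ steps the graph has $t$ edges; multiple edges are allowed), independently of the past choose a set $V_t$ of $k(n)$ distinct vertices uniformly at random, and let $V_{t,d}$ be the set of vertices in $V_t$ whose current degree is $d$. If $|V_{t,0}|\ge 2$, add an edge between two vertices of $V_{t,0}$ sampled uniformly at random without replacement; otherwise, if $|V_{t,1}|\ge 2$, add an edge between two vertices of $V_{t,1}$ sampled uniformly at random without replacement; otherwise add an edge between two vertices of $V_t$ sampled uniformly at random without replacement. Edge types and colors: an edge is an $(i,j)$ edge if, at the moment it was added, its two endpoints had degrees $i$ and $j$. Each added edge is colored as follows: a $(0,0)$ edge added at a time $t\le n/2$ is blue; a $(1,1)$ edge added at a time $t\ge n/2$ is blue; a $(0,1)$ or $(1,1)$ edge added at a time $t< n/2$ is green; every other edge (i.e. $(0,0)$ or $(0,1)$ edges added after time $n/2$, and any $(i,j)$ edge with $i\ge2$ or $j\ge 2$ at any time) is red. *)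

From HB Require Import structures.
From mathcomp Require Import all_boot all_order all_algebra.
Set Implicit Arguments. Unset Strict Implicit. Unset Printing Implicit Defensive.
Import Order.TTheory GRing.Theory Num.Theory.

(* Uniform average of f over a finite set A (A nonempty in all uses). *)
Definition avg (T : finType) (A : {set T}) (f : T -> rat) : rat :=
  ((\sum_(x in A) f x) / (#|A|%:R))%R.

(* Vertices are 'I_n; a graph state is recorded by its degree function. *)
Definition degs (n : nat) := {ffun 'I_n -> nat}.

Definition ksets (n k : nat) : {set {set 'I_n}} := [set V : {set 'I_n} | #|V| == k].

Definition Vd (n : nat) (d : degs n) (V : {set 'I_n}) (j : nat) : {set 'I_n} :=
  [set v in V | d v == j].

(* The set from which the two endpoints are sampled. *)
Definition cand (n : nat) (d : degs n) (V : {set 'I_n}) : {set 'I_n} :=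
  if 2 <= #|Vd d V 0| then Vd d V 0
  else if 2 <= #|Vd d V 1| then Vd d V 1
  else V.

(* Ordered pairs of distinct vertices of W: sampling two vertices uniformly
   without replacement. *)
Definition dpairs (n : nat) (W : {set 'I_n}) : {set 'I_n * 'I_n} :=
  [set p : 'I_n * 'I_n | [&& p.1 \in W, p.2 \in W & p.1 != p.2]].

Definition add_edge (n : nat) (d : degs n) (p : 'I_n * 'I_n) : degs n :=
  [ffun v => d v + (v == p.1) + (v == p.2)].

(* Colours of an (i,j) edge added at time t (with n vertices). "t <= n/2" is
   written 2t <= n, etc. *)
Definition is_blue (n t i j : nat) : bool :=
  [&& i == 0, j == 0 & 2 * t <= n] || [&& i == 1, j == 1 & n <= 2 * t].
Definition is_green (n t i j : nat) : bool :=
  (2 * t < n) && (((i == 0) && (j == 1)) || ((i == 1) && (j == 0))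
                  || ((i == 1) && (j == 1))).
Definition is_red (n t i j : nat) : bool := ~~ is_blue n t i j && ~~ is_green n t i j.

Definition rg_cost (n t i j : nat) : rat :=
  ((is_red n t i j)%:R + (is_green n t i j)%:R)%R.

Fixpoint expRG (n k r s : nat) (d : degs n) : rat :=
  match r with
  | 0 => 0%R
  | r'.+1 =>
      avg (ksets n k) (fun V =>
        avg (dpairs (cand d V)) (fun p =>
          (rg_cost n s (d p.1) (d p.2) + expRG k r' s.+1 (add_edge d p))%R))
  end.

Definition DRV_expected_red_green (n k t : nat) : rat :=
  @expRG n k t 0 [ffun => 0].

From HB Require Import structures.
From mathcomp Require Import all_boot all_order all_algebra.
From mathcomp Require Import zify ring lra.
Import Order.TTheory GRing.Theory Num.Theory.
Set Implicit Arguments. Unset Strict Implicit. Unset Printing Implicit Defensive.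

(* Let beta a be the probability that a uniform k-set meets a fixed a-set in
   at most one vertex; beta is nonincreasing and sums to 2 (n + 1) / (k + 1).
   Before time n/2 an edge is red or green only if the sampled k-set contains
   at most one of the z >= n - 2 s isolated vertices, and after n/2 only if it
   is a (0,0) edge (which lowers z by two) or the k-set contains at most one of
   the at least 2 (n - z) - 2 s vertices of degree 1. Hence a potential made of
   z and tail sums of beta dominates the expected future cost, and it starts
   below 24 n / k. *)

Lemma sum_nat_bool (T : finType) (P : pred T) : \sum_x (P x : nat) = #|[set x | P x]|.
Proof. by rewrite -sum1dep_card [RHS]big_mkcond; apply: eq_bigr => x _; case: (P x). Qed.

Section DrawsMeetingASet.
Variable T : finType.
Implicit Types (A V : {set T}) (x : T).

Lemma cards_draws_setC A k :
  #|[set V : {set T} | V \subset ~: A & #|V| == k]| = 'C(#|T| - #|A|, k).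
Proof. by rewrite cards_draws [#|~: A|]cardsCs setCK. Qed.

Lemma card_draws_disjoint A k :
  #|[set V : {set T} | (#|V| == k) && (V :&: A == set0)]| = 'C(#|T| - #|A|, k).
Proof.
rewrite -cards_draws_setC.
by apply: eq_card => V; rewrite !inE andbC setI_eq0 disjoints_subset.
Qed.

Lemma card_draws_meet_set1 A x k : x \in A ->
  #|[set V : {set T} | (#|V| == k.+1) && (V :&: A == [set x])]| = 'C(#|T| - #|A|, k).
Proof.
move=> xA; rewrite -cards_draws_setC.
set D := [set U : {set T} | U \subset ~: A & #|U| == k].
have xnU U : U \in D -> x \notin U.
  by rewrite inE => /andP[/subsetP sUA _]; apply/negP => /sUA; rewrite inE xA.
rewrite -(@card_in_imset _ _ (fun U => x |: U) D); last first.
  by move=> U1 U2 /xnU x1 /xnU x2 /= E; rewrite -(setU1K x1) E setU1K.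
apply: eq_card => V; rewrite inE /=; apply/andP/imsetP => [[/eqP cV /eqP VA] | [U UD ->]].
  have xV : x \in V by have := set11 x; rewrite -VA inE => /andP[].
  exists (V :\ x); last by rewrite setD1K.
  rewrite !inE; apply/andP; split.
    apply/subsetP => y; rewrite !inE => /andP[yx yV]; apply/negP => yA.
    by have := yx; rewrite -in_set1 -VA inE yV yA.
  by move: cV; rewrite (cardsD1 x) xV add1n => -[->].
move: (UD); rewrite inE => /andP[sUA /eqP cU].
split; first by rewrite cardsU1 xnU // cU.
apply/eqP/setP => y; rewrite !inE.
case: (eqVneq y x) => [-> | yx] /=; first by rewrite xA.
by apply/negP => /andP[/(subsetP sUA)]; rewrite inE => /negPf ->.
Qed.

Lemma card1_sum_set1 A V : V \subset A ->
  (#|V| == 1 : nat) = \sum_(x in A) (V == [set x] : nat).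
Proof.
move=> sVA; have [/cards1P [x0 eV] | V1] := boolP (#|V| == 1).
  have x0A : x0 \in A by apply: (subsetP sVA); rewrite eV set11.
  rewrite eV (bigD1 x0) //= eqxx big1 // => x /andP[_ xx0].
  by rewrite eqEcard sub1set !inE eq_sym (negPf xx0).
rewrite big1 // => x _; apply/eqP; rewrite eqb0.
by apply: contra V1 => /eqP ->; rewrite cards1.
Qed.

Lemma card_draws_meet1 A k :
  #|[set V : {set T} | (#|V| == k.+1) && (#|V :&: A| == 1)]| = #|A| * 'C(#|T| - #|A|, k).
Proof.
rewrite -sum_nat_bool.
under eq_bigr => V _ do rewrite -mulnb (card1_sum_set1 (subsetIr V A)) big_distrr.
rewrite exchange_big /= -sum_nat_const; apply: eq_bigr => x xA.
rewrite -(card_draws_meet_set1 k xA) -sum_nat_bool.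
by apply: eq_bigr => V _; rewrite mulnb.
Qed.

End DrawsMeetingASet.

Lemma sum_bin_subn j m : \sum_(0 <= a < m.+1) 'C(m - a, j) = 'C(m.+1, j.+1).
Proof.
elim: m => [|m IHm]; first by rewrite big_nat1 subn0 !bin0n; case: j.
rewrite big_nat_recl // subn0.
under eq_bigr => a _ do rewrite subSS.
by rewrite IHm [in RHS]binS addnC.
Qed.

Lemma sum_mul_bin_subn j m : \sum_(0 <= a < m.+1) a * 'C(m - a, j) = 'C(m.+1, j.+2).
Proof.
elim: m => [|m IHm]; first by rewrite big_nat1 mul0n bin_small.
rewrite big_nat_recl // mul0n add0n.
under eq_bigr => a _ do rewrite subSS mulSn.
by rewrite big_split /= IHm sum_bin_subn [in RHS]binS addnC.
Qed.

Local Open Scope ring_scope.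

Section Averages.
Variable T : finType.
Implicit Types (A : {set T}) (f h : T -> rat).

Lemma ler_avg A f h : (forall x, x \in A -> f x <= h x) -> avg A f <= avg A h.
Proof. by move=> fh; rewrite /avg ler_wpM2r ?invr_ge0 ?ler0n // ler_sum. Qed.

Lemma avg_affine A (c a : rat) f :
  A != set0 -> avg A (fun x => c + a * f x) = c + a * avg A f.
Proof.
move=> A0; have cA : #|A|%:R != 0 :> rat by rewrite pnatr_eq0 cards_eq0.
by rewrite /avg big_split /= sumr_const -big_distrr /= -mulr_natr; field.
Qed.

Lemma avg_cst A (c : rat) : A != set0 -> avg A (fun _ => c) = c.
Proof.
move=> A0; have cA : #|A|%:R != 0 :> rat by rewrite pnatr_eq0 cards_eq0.
by rewrite /avg sumr_const -mulr_natr; field.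
Qed.

End Averages.

Lemma ler_avg2 (T U : finType) (A : {set T}) (W : T -> {set U}) (F : T -> U -> rat)
    (c a : rat) (h : T -> rat) :
  A != set0 -> (forall x, x \in A -> W x != set0) ->
  (forall x y, x \in A -> y \in W x -> F x y <= c + a * h x) ->
  avg A (fun x => avg (W x) (F x)) <= c + a * avg A h.
Proof.
move=> A0 W0 Fh; rewrite -avg_affine //; apply: ler_avg => x xA.
by rewrite -(avg_cst (c + a * h x) (W0 x xA)); apply: ler_avg => y; apply: Fh.
Qed.

Section NatIndexedSums.
Variables (R : numDomainType) (f : nat -> R).
Hypothesis f_ge0 : forall m, 0 <= f m.

Lemma ler_sum_nat_subrange a b c : (b <= c)%N ->
  \sum_(a <= u < b) f u <= \sum_(0 <= u < c) f u.
Proof.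
move=> bc; have [ab | ba] := leqP a b; last by rewrite big_geq ?sumr_ge0 // ltnW.
rewrite (@big_cat_nat _ _ _ a 0 c) //=; last exact: leq_trans bc.
rewrite (@big_cat_nat _ _ _ b a c) //= addrCA -[leLHS]addr0 lerD //.
by rewrite addr_ge0 // sumr_ge0.
Qed.

Hypothesis f_le1 : forall m, f m <= 1.

(* Because of truncated subtraction the terms with u > a are all f 0. *)
Lemma sum_subn_le a w :
  \sum_(0 <= u < w) f (a - u)%N <= (w - a)%N%:R + \sum_(0 <= m < a.+1) f m.
Proof.
elim: a w => [|a IHa] w.
  rewrite big_nat1; under eq_bigr => u _ do rewrite sub0n.
  rewrite sumr_const_nat subn0 -[leLHS]addr0 lerD //.
  by rewrite -[leRHS]/(1 *+ w) lerMn2r f_le1 orbT.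
case: w => [|w]; first by rewrite big_geq // sub0n add0r sumr_ge0.
rewrite big_nat_recl // subn0 subSS.
under eq_bigr => u _ do rewrite subSS.
by rewrite big_nat_recr //= addrA addrC lerD.
Qed.

End NatIndexedSums.

Section MeetProbability.
Variables n k : nat.
Hypotheses (k_ge2 : (2 <= k)%N) (k_le_n : (k <= n)%N).

(* The k-subsets meeting a fixed a-set in no vertex, or in exactly one. *)
Definition nmeet_le1 (a : nat) : nat := 'C(n - a, k) + a * 'C(n - a, k.-1).
Definition beta (a : nat) : rat := (nmeet_le1 a)%:R / 'C(n, k)%:R.
Definition beta_total : rat := \sum_(0 <= a < n.+1) beta a.

Lemma ksets_neq0 : ksets n k != set0.
Proof. by rewrite -card_gt0 card_draws card_ord bin_gt0. Qed.

Lemma nmeet_le1_nonincr a b : (a <= b)%N -> (nmeet_le1 b <= nmeet_le1 a)%N.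
Proof.
move=> /subnK <-; elim: (b - a)%N => [|c IHc] //; rewrite addSn.
apply: leq_trans IHc; rewrite /nmeet_le1; set m := (c + a)%N.
have [k' ->] : exists k', k = k'.+2 by exists k.-2; lia.
have [mn | nm] := ltnP m n.
  have -> : (n - m = (n - m.+1).+1)%N by lia.
  by rewrite !binS /=; nia.
have -> : (n - m = 0)%N by lia.
have -> : (n - m.+1 = 0)%N by lia.
by rewrite !bin0n muln0.
Qed.

Lemma ler_beta a b : (a <= b)%N -> beta b <= beta a.
Proof.
move=> ab; rewrite /beta ler_pM2r ?invr_gt0 ?ltr0n ?bin_gt0 // ler_nat.
exact: nmeet_le1_nonincr.
Qed.

Lemma beta_ge0 a : 0 <= beta a.
Proof. by rewrite /beta divr_ge0. Qed.

Lemma beta_le1 a : beta a <= 1.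
Proof.
apply: le_trans (ler_beta (leq0n a)) _.
by rewrite /beta /nmeet_le1 subn0 mul0n addn0 divff // pnatr_eq0 -lt0n bin_gt0.
Qed.

Lemma beta_totalE : beta_total = 2 * n.+1%:R / k.+1%:R.
Proof.
rewrite /beta_total /beta -big_distrl /= -natr_sum.
have -> : (\sum_(0 <= a < n.+1) nmeet_le1 a = 2 * 'C(n.+1, k.+1))%N.
  rewrite big_split /= sum_bin_subn.
  by case: k k_ge2 => [|[|k']] // _ /=; rewrite sum_mul_bin_subn addnn -mul2n.
apply/eqP; rewrite eqr_div ?pnatr_eq0 -?lt0n ?bin_gt0 // -!natrM.
by rewrite -!mulnA mul_bin_diag [(k.+1 * _)%N]mulnC.
Qed.

Lemma beta_total_ge0 : 0 <= beta_total.
Proof. by rewrite sumr_ge0 // => a _; apply: beta_ge0. Qed.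

Lemma beta_total_le : beta_total <= 4 * (n%:R / k%:R).
Proof.
have k0 : 0 < k%:R :> rat by rewrite ltr0n; lia.
rewrite beta_totalE mulrA ler_pdivrMr // mulrAC ler_pdivlMr // -!natrM ler_nat; nia.
Qed.

Lemma avg_meet_le1 (A : {set 'I_n}) :
  avg (ksets n k) (fun V => (#|V :&: A| <= 1)%N%:R) = beta #|A|.
Proof.
rewrite /avg /ksets card_draws card_ord /beta -natr_sum big_mkcond /=.
rewrite (eq_bigr (fun V : {set 'I_n} => ((#|V| == k) && (#|V :&: A| <= 1)%N) : nat));
  last by move=> V _; rewrite inE; case: (#|V| == k).
rewrite sum_nat_bool.
congr (_%:R / _).
set S0 := [set V : {set 'I_n} | (#|V| == k) && (V :&: A == set0)].
set S1 := [set V : {set 'I_n} | (#|V| == k.-1.+1) && (#|V :&: A| == 1)].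
have -> : [set V : {set 'I_n} | #|V| == k & #|V :&: A| <= 1]%N = S0 :|: S1.
  apply/setP => V; rewrite !inE prednK ?(ltnW k_ge2) // -andb_orr -cards_eq0.
  by case: #|V :&: A| => [|[|m]].
have S01 : S0 :&: S1 = set0.
  by apply/setP => V; rewrite !inE -cards_eq0; case: #|V :&: A| => [|m]; rewrite /= ?andbF.
by rewrite cardsU S01 cards0 subn0 card_draws_disjoint card_draws_meet1 card_ord.
Qed.

End MeetProbability.

Section DegreeStates.
Variable n : nat.
Implicit Types (d : degs n) (V W : {set 'I_n}) (p : 'I_n * 'I_n).

Definition deg0 d := [set v | d v == 0%N].
Definition deg1 d := [set v | d v == 1%N].
Definition has_edges d (s : nat) := (\sum_v d v == 2 * s)%N.

Lemma card_deg0_le_n d : (#|deg0 d| <= n)%N.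
Proof. by rewrite -[leqRHS]card_ord max_card. Qed.

Lemma card_deg0_lb d s : has_edges d s -> (n <= #|deg0 d| + 2 * s)%N.
Proof.
move=> /eqP <-; rewrite /deg0 -sum_nat_bool -big_split /= -{1}(card_ord n) -sum1_card.
by apply: leq_sum => v _; case: (d v).
Qed.

Lemma card_deg1_lb d s : has_edges d s -> (2 * (n - #|deg0 d|) <= 2 * s + #|deg1 d|)%N.
Proof.
move=> /eqP Ed.
suff : (2 * n <= 2 * #|deg0 d| + #|deg1 d| + \sum_v d v)%N by rewrite Ed; lia.
rewrite /deg0 /deg1 -!sum_nat_bool -{1}(card_ord n) -sum1_card !big_distrr /= -!big_split.
by apply: leq_sum => v _; case: (d v) => [|[|m]].
Qed.

Lemma has_edges_add_edge d s p : has_edges d s -> has_edges (add_edge d p) s.+1.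
Proof.
move=> /eqP Ed; rewrite /has_edges.
under eq_bigr => v _ do rewrite ffunE.
rewrite !big_split /= Ed !sum_nat_bool.
rewrite (@eq_card1 _ p.1) ?(@eq_card1 _ p.2) => [|v|v]; rewrite ?inE //.
by rewrite -addnA mulnS addnC.
Qed.

Lemma deg0_add_edge d p : deg0 (add_edge d p) = deg0 d :\ p.1 :\ p.2.
Proof.
apply/setP => v; rewrite !inE ffunE !addn_eq0 !eqb0.
by rewrite andbC [X in _ && X]andbC andbA.
Qed.

Lemma card_deg0_add_edge d p : (#|deg0 (add_edge d p)| <= #|deg0 d|)%N.
Proof.
by rewrite deg0_add_edge; apply/subset_leq_card/(subset_trans (subsetDl _ _))/subsetDl.
Qed.

Lemma card_deg0_add_edge00 d p : p.1 != p.2 -> d p.1 = 0%N -> d p.2 = 0%N ->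
  #|deg0 (add_edge d p)|.+2 = #|deg0 d|.
Proof.
move=> p12 d1 d2; rewrite deg0_add_edge.
rewrite [in RHS](cardsD1 p.1) [in RHS](cardsD1 p.2 (deg0 d :\ p.1)).
by rewrite !inE d1 d2 eq_sym p12.
Qed.

Lemma dpairs_neq0 W : (2 <= #|W|)%N -> dpairs W != set0.
Proof.
move=> W2; have /card_gt0P [x xW] : (0 < #|W|)%N by apply: leq_trans W2.
have /card_gt0P [y] : (0 < #|W :\ x|)%N by move: W2; rewrite (cardsD1 x) xW.
by rewrite !inE => /andP[yx yW]; apply/set0Pn; exists (x, y); rewrite inE /= xW yW eq_sym yx.
Qed.

Lemma card_cand d V (k : nat) : V \in ksets n k -> (2 <= k)%N -> (2 <= #|cand d V|)%N.
Proof. by rewrite inE => /eqP cV k2; rewrite /cand; do 2?case: ifP => //; rewrite cV. Qed.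

End DegreeStates.

Section EdgeCosts.
Variable n : nat.
Implicit Types (s i j : nat) (d : degs n) (V : {set 'I_n}) (p : 'I_n * 'I_n).

Lemma rg_cost_le1 s i j : rg_cost n s i j <= 1.
Proof.
rewrite /rg_cost /is_red; case: (is_green n s i j); rewrite ?andbF ?addr0 ?add0r //.
by case: (_ && _).
Qed.

Lemma rg_cost00 s : (2 * s < n)%N -> rg_cost n s 0 0 = 0.
Proof. by move=> sn; rewrite /rg_cost /is_red /is_blue /is_green /= (ltnW sn) andbF. Qed.

Lemma rg_cost11 s : (n <= 2 * s)%N -> rg_cost n s 1 1 = 0.
Proof. by move=> ns; rewrite /rg_cost /is_red /is_blue /is_green /= ns ltnNge ns. Qed.

Lemma dpairs_cand_deg0 d V p : (2 <= #|V :&: deg0 d|)%N ->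
  p \in dpairs (cand d V) -> [/\ p.1 != p.2, d p.1 = 0%N & d p.2 = 0%N].
Proof.
move=> V2; rewrite /cand /Vd setIdE -/(deg0 d) V2 inE => /and3P[].
by rewrite !inE => /andP[_ /eqP ->] /andP[_ /eqP ->].
Qed.

Lemma dpairs_cand_deg1 d V p : (#|V :&: deg0 d| < 2)%N -> (2 <= #|V :&: deg1 d|)%N ->
  p \in dpairs (cand d V) -> [/\ p.1 != p.2, d p.1 = 1%N & d p.2 = 1%N].
Proof.
rewrite /cand /Vd !setIdE -/(deg0 d) -/(deg1 d) ltnNge => /negPf -> V2.
rewrite V2 inE => /and3P[].
by rewrite !inE => /andP[_ /eqP ->] /andP[_ /eqP ->].
Qed.

Lemma early_step_le s d V p : (2 * s < n)%N -> p \in dpairs (cand d V) ->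
  rg_cost n s (d p.1) (d p.2) + 3 / 2 * #|deg0 (add_edge d p)|%:R
    <= 3 / 2 * #|deg0 d|%:R - 3 + 4 * (#|V :&: deg0 d| <= 1)%N%:R.
Proof.
move=> sn pV; have := rg_cost_le1 s (d p.1) (d p.2).
have : #|deg0 (add_edge d p)|%:R <= #|deg0 d|%:R :> rat by rewrite ler_nat card_deg0_add_edge.
case: (ltnP 1 #|V :&: deg0 d|) => [V2 | _] /=; last by lra.
have [p12 d1 d2] := dpairs_cand_deg0 V2 pV.
rewrite d1 d2 (rg_cost00 sn) -(card_deg0_add_edge00 p12 d1 d2) -addn2 natrD; lra.
Qed.

Lemma late_step_le s d V p : (n <= 2 * s)%N -> p \in dpairs (cand d V) ->
  rg_cost n s (d p.1) (d p.2) + #|deg0 (add_edge d p)|%:R / 2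
    <= #|deg0 d|%:R / 2 + (#|V :&: deg1 d| <= 1)%N%:R.
Proof.
move=> ns pV; have := rg_cost_le1 s (d p.1) (d p.2).
have : #|deg0 (add_edge d p)|%:R <= #|deg0 d|%:R :> rat by rewrite ler_nat card_deg0_add_edge.
have : 0 <= (#|V :&: deg1 d| <= 1)%N%:R :> rat by [].
case: (ltnP 1 #|V :&: deg0 d|) => [V02 | V01] /=.
  have [p12 d1 d2] := dpairs_cand_deg0 V02 pV.
  rewrite -(card_deg0_add_edge00 p12 d1 d2) -addn2 natrD; lra.
case: (ltnP 1 #|V :&: deg1 d|) => [V12 | _] /=; last by lra.
have [p12 d1 d2] := dpairs_cand_deg1 V01 V12 pV.
rewrite d1 d2 (rg_cost11 ns); lra.
Qed.

End EdgeCosts.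

Section Potential.
Variables n k : nat.
Hypotheses (k_ge2 : (2 <= k)%N) (k_le_n : (k <= n)%N).
Local Notation beta := (beta n k).
Local Notation beta_total := (beta_total n k).
Implicit Types (s z : nat) (d : degs n).

Definition late_tail s z : rat := \sum_(s <= u < n) beta (2 * (n - z) - 2 * u).

(* The coefficient 3/2 is what makes early_pot dominate late_pot at time n/2,
   because late_tail is at most z + beta_total there (late_tail_le). *)
Definition early_pot s d : rat := 3 / 2 * (#|deg0 d|%:R + (2 * s)%N%:R - n%:R)
  + 4 * \sum_(s <= u < uphalf n) beta (n - 2 * u) + beta_total.
Definition late_pot s d : rat := #|deg0 d|%:R / 2 + late_tail s #|deg0 d|.
Definition pot s d : rat := if (2 * s < n)%N then early_pot s d else late_pot s d.

Lemma late_tail_le s z : (z <= n)%N -> late_tail s z <= z%:R + beta_total.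
Proof.
move=> zn; have beta0 := beta_ge0 n k.
apply: (@le_trans _ _ (\sum_(s <= u < n) beta (n - z - u))).
  by apply: ler_sum_nat => u _; apply: (ler_beta k_ge2 k_le_n); lia.
apply: le_trans (@ler_sum_nat_subrange _ (fun u => beta (n - z - u)) (fun _ => beta0 _)
  s n n (leqnn n)) _.
apply: le_trans (sum_subn_le beta0 (beta_le1 k_ge2 k_le_n) _ _) _.
rewrite (_ : n - (n - z) = z)%N; last lia.
by rewrite lerD // ler_sum_nat_subrange //; lia.
Qed.

Lemma late_tail_step s z : (s < n)%N ->
  late_tail s z = beta (2 * (n - z) - 2 * s) + late_tail s.+1 z.
Proof. by move=> sn; rewrite /late_tail big_ltn. Qed.

Lemma late_tail_le_deg0 s z z' : (z' <= z)%N -> late_tail s z' <= late_tail s z.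
Proof. by move=> zz; apply: ler_sum_nat => u _; apply: (ler_beta k_ge2 k_le_n); lia. Qed.

Lemma early_sum_le : \sum_(0 <= u < uphalf n) beta (n - 2 * u) <= 1 + beta_total.
Proof.
have beta0 := beta_ge0 n k; have half_n := odd_double_half n.
apply: (@le_trans _ _ (\sum_(0 <= u < uphalf n) beta (n./2 - u))).
  by apply: ler_sum_nat => u _; apply: (ler_beta k_ge2 k_le_n); rewrite -muln2 in half_n; lia.
apply: le_trans (sum_subn_le beta0 (beta_le1 k_ge2 k_le_n) _ _) _.
apply: lerD; first by rewrite uphalf_half addnK lern1 leq_b1.
by rewrite ler_sum_nat_subrange //; rewrite -muln2 in half_n; lia.
Qed.

Lemma late_pot_le_early_pot s d : (n <= 2 * s)%N -> late_pot s d <= early_pot s d.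
Proof.
move=> ns; rewrite /late_pot /early_pot.
have := late_tail_le s (card_deg0_le_n d).
have : n%:R <= (2 * s)%N%:R :> rat by rewrite ler_nat.
have : 0 <= \sum_(s <= u < uphalf n) beta (n - 2 * u).
  by apply: sumr_ge0 => u _; apply: beta_ge0.
by have := beta_total_ge0 n k; lra.
Qed.

Lemma pot_ge0 s d : has_edges d s -> 0 <= pot s d.
Proof.
move=> /card_deg0_lb zs; rewrite /pot; case: ifP => _.
  rewrite /early_pot; have : n%:R <= #|deg0 d|%:R + (2 * s)%N%:R :> rat.
    by rewrite -natrD ler_nat.
  have : 0 <= \sum_(s <= u < uphalf n) beta (n - 2 * u).
    by apply: sumr_ge0 => u _; apply: beta_ge0.
  by have := beta_total_ge0 n k; lra.
by rewrite /late_pot addr_ge0 ?divr_ge0 // sumr_ge0 // => u _; apply: beta_ge0.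
Qed.

Definition step_avg (d : degs n) (F : {set 'I_n} -> 'I_n * 'I_n -> rat) : rat :=
  avg (ksets n k) (fun V => avg (dpairs (cand d V)) (F V)).

Lemma ler_step_avg d F (c a : rat) (h : {set 'I_n} -> rat) :
  (forall V p, p \in dpairs (cand d V) -> F V p <= c + a * h V) ->
  step_avg d F <= c + a * avg (ksets n k) h.
Proof.
move=> Fh; apply: ler_avg2 (ksets_neq0 k_le_n) _ (fun V p _ => Fh V p) => V VK.
exact: dpairs_neq0 (card_cand d VK k_ge2).
Qed.

Definition cost_plus_pot s d : {set 'I_n} -> 'I_n * 'I_n -> rat :=
  fun _ p => rg_cost n s (d p.1) (d p.2) + pot s.+1 (add_edge d p).

Lemma pot_early_step s d : has_edges d s -> (2 * s < n)%N ->
  step_avg d (cost_plus_pot s d) <= early_pot s d.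
Proof.
move=> Eds sn; set S := \sum_(s.+1 <= u < uphalf n) beta (n - 2 * u).
apply: le_trans (ler_step_avg (c := 3 / 2 * (#|deg0 d|%:R + (2 * s)%N%:R - n%:R) + 4 * S
  + beta_total) (a := 4) (h := fun V => (#|V :&: deg0 d| <= 1)%N%:R) _) _.
  move=> V p pV; rewrite /cost_plus_pot.
  have : pot s.+1 (add_edge d p) <= early_pot s.+1 (add_edge d p).
    rewrite /pot; case: ifP => [_ | /negbT]; first exact: lexx.
    by rewrite -leqNgt; apply: late_pot_le_early_pot.
  have := early_step_le sn pV.
  have e2 : (2 * s.+1)%N%:R = (2 * s)%N%:R + 2 :> rat by rewrite mulnS addnC natrD.
  rewrite /early_pot -/S e2.
  move: (rg_cost _ _ _ _) #|deg0 (add_edge d p)|%:R #|deg0 d|%:R.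
  by move: (#|V :&: deg0 d| <= 1)%N%:R => b c z' z; lra.
have s_half : (s < uphalf n)%N by rewrite gtn_uphalf_double -mul2n.
rewrite (avg_meet_le1 k_ge2) /early_pot (big_ltn s_half) -/S.
have : beta #|deg0 d| <= beta (n - 2 * s).
  by apply: (ler_beta k_ge2 k_le_n); have := card_deg0_lb Eds; lia.
lra.
Qed.

Lemma pot_late_step s d : has_edges d s -> (n <= 2 * s)%N -> (s < n)%N ->
  step_avg d (cost_plus_pot s d) <= late_pot s d.
Proof.
move=> Eds ns sn.
apply: le_trans (ler_step_avg (c := #|deg0 d|%:R / 2 + late_tail s.+1 #|deg0 d|)
  (a := 1) (h := fun V => (#|V :&: deg1 d| <= 1)%N%:R) _) _.
  move=> V p pV; rewrite /cost_plus_pot.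
  have : pot s.+1 (add_edge d p) = late_pot s.+1 (add_edge d p).
    by rewrite /pot ifN // -leqNgt; apply: leq_trans ns _; lia.
  have := late_tail_le_deg0 s.+1 (card_deg0_add_edge d p).
  have := late_step_le ns pV.
  by rewrite /late_pot; lra.
rewrite (avg_meet_le1 k_ge2) /late_pot (late_tail_step _ sn).
have : beta #|deg1 d| <= beta (2 * (n - #|deg0 d|) - 2 * s).
  by apply: (ler_beta k_ge2 k_le_n); have := card_deg1_lb Eds; lia.
lra.
Qed.

Lemma pot_step s d : has_edges d s -> (s < n)%N -> step_avg d (cost_plus_pot s d) <= pot s d.
Proof.
move=> Eds sn; rewrite /pot; case: ltnP => [sn2 | ns2].
  exact: pot_early_step.
exact: pot_late_step.
Qed.

Lemma expRG_le_pot r s d : has_edges d s -> (s + r <= n)%N -> expRG k r s d <= pot s d.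
Proof.
elim: r s d => [|r IHr] s d Eds srn; first exact: pot_ge0.
apply: le_trans (pot_step Eds _); last by rewrite -addn1 (leq_trans _ srn) // leq_add2l.
apply: ler_avg => V _; apply: ler_avg => p _; rewrite lerD2l.
by apply: IHr; [exact: has_edges_add_edge | rewrite addSnnS].
Qed.

Lemma pot_init_le : pot 0 [ffun => 0%N] <= 24 * n%:R / k%:R.
Proof.
have k0 : 0 < k%:R :> rat by rewrite ltr0n (leq_trans _ k_ge2).
have n_k : 1 <= n%:R / k%:R :> rat by rewrite ler_pdivlMr // mul1r ler_nat.
have deg0_init : #|deg0 ([ffun => 0%N] : degs n)| = n.
  by rewrite -[RHS]card_ord; apply: eq_card => v; rewrite !inE ffunE.
have n_pos : (2 * 0 < n)%N by lia.
rewrite /pot (ifT _ _ n_pos) /early_pot deg0_init -mulrA.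
by have := early_sum_le; have := beta_total_le k_ge2 k_le_n; lra.
Qed.

End Potential.

Local Close Scope ring_scope.

Theorem lemma1 (k : nat -> nat)
  (hk : forall n, 2 <= n -> 2 <= k n <= n)
  (hinf : forall M, exists N, forall n, N <= n -> M <= k n)
  (hlog : forall n, 2 <= n -> n <= 2 ^ k n) :
  exists C : rat, forall n t, 2 <= n -> t <= n ->
    (DRV_expected_red_green n (k n) t <= C * n%:R / (k n)%:R)%R.
Proof.
exists 24%R => n t n2 tn; have /andP[k2 kn] := hk n n2.
apply: le_trans (pot_init_le k2 kn).
by apply: expRG_le_pot; rewrite // /has_edges big1 // => v _; rewrite ffunE.
Qed.
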